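(* If $\Omega$ is an I-thick domain in $\mathbb{R}^n$ and $\partial\Omega$ satisfies the ball condition, then $\Omega$ is interior regular.
   Context: A domain is a non-empty open set; proper if $\ne\mathbb{R}^n$. $\mathcal{Q}(S)$ denotes the open axis-parallel cubes contained in $S$, $l(Q)$ the edge length. A proper domain $\Omega$ is I-thick if for any $c_1,c_2,c_3,c_4>0$ and $j_0\in\mathbb{N}$ there are $c_5,c_6,c_7,c_8>0$ such that for every $j\ge j_0$ and every $Q^e\in\mathcal{Q}(\Omega^c)$ with $c_12^{-j}\le l(Q^e)\le c_22^{-j}$ and $c_32^{-j}\le\operatorname{dist}(Q^e,\partial\Omega)\le c_42^{-j}$ there is $Q^i\in\mathcal{Q}(\Omega)$ with $c_52^{-j}\le l(Q^i)\le c_62^{-j}$ and $c_72^{-j}\le\operatorname{dist}(Q^i,\partial\Omega)\le\operatorname{dist}(Q^e,Q^i)\le c_82^{-j}$. A non-empty closed $S\subset\mathbb{R}^n$ satisfies the ball condition if there is $\eta\in(0,1)$ such that for every ball $B(x,r)$ with $x\in S$ and $r\in(0,1)$ there is a ball $B(y,\eta r)\subset B(x,r)$ with $B(y,\eta r)\cap S=\emptyset$. A domain $\Omega$ is interior regular if there is $c>0$ such that $|\Omega\cap Q|\ge c|Q|$ for every cube $Q$ with side length at most $1$ centred at a point of $\partial\Omega$. *)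

From HB Require Import structures.
From mathcomp Require Import all_boot all_order all_algebra.
From mathcomp Require Import all_classical all_reals all_analysis.
Set Implicit Arguments. Unset Strict Implicit. Unset Printing Implicit Defensive.
Import Order.TTheory GRing.Theory Num.Theory numFieldNormedType.Exports.
Local Open Scope classical_set_scope.
Local Open Scope ring_scope.

(* Points of R^n are row vectors 'rV[R]_n; coordinate i of x is x 0 i. *)

Definition edist (R : realType) (n : nat) (x y : 'rV[R]_n) : R :=
  Num.sqrt (\sum_(i < n) (x 0 i - y 0 i) ^+ 2).

Definition eball (R : realType) (n : nat) (x : 'rV[R]_n) (r : R) : set 'rV[R]_n :=
  [set y | edist x y < r].

Definition setdist (R : realType) (n : nat) (A B : set 'rV[R]_n) : R :=
  inf [set edist x y | x in A & y in B].

Definition bdry (R : realType) (n : nat) (A : set 'rV[R]_n) : set 'rV[R]_n :=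
  closure A `\` A°.

Definition domain (R : realType) (n : nat) (O : set 'rV[R]_n) : Prop :=
  open O /\ O !=set0.
Definition proper_domain (R : realType) (n : nat) (O : set 'rV[R]_n) : Prop :=
  domain O /\ O != setT.

Definition cube (R : realType) (n : nat) (c : 'rV[R]_n) (l : R) : set 'rV[R]_n :=
  [set x | forall i : 'I_n, `|x 0 i - c 0 i| < l / 2].

(* (c, l) describes a cube of Q(S): l > 0 and the open cube lies in S. *)
Definition cube_in (R : realType) (n : nat) (S : set 'rV[R]_n) (c : 'rV[R]_n) (l : R) : Prop :=
  0 < l /\ cube c l `<=` S.

Definition I_thick (R : realType) (n : nat) (O : set 'rV[R]_n) : Prop :=
  proper_domain O /\
  forall (c1 c2 c3 c4 : R) (j0 : nat), 0 < c1 -> 0 < c2 -> 0 < c3 -> 0 < c4 ->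
  exists c5 c6 c7 c8 : R, [/\ 0 < c5, 0 < c6, 0 < c7 & 0 < c8] /\
    forall (j : nat) (ce : 'rV[R]_n) (le : R), (j0 <= j)%N ->
      cube_in (~` O) ce le ->
      c1 * (2 ^- j) <= le <= c2 * (2 ^- j) ->
      c3 * (2 ^- j) <= setdist (cube ce le) (bdry O) <= c4 * (2 ^- j) ->
      exists (ci : 'rV[R]_n) (li : R),
        [/\ cube_in O ci li,
            c5 * (2 ^- j) <= li <= c6 * (2 ^- j),
            c7 * (2 ^- j) <= setdist (cube ci li) (bdry O),
            setdist (cube ci li) (bdry O) <= setdist (cube ce le) (cube ci li) &
            setdist (cube ce le) (cube ci li) <= c8 * (2 ^- j)].

Definition ball_condition (R : realType) (n : nat) (S : set 'rV[R]_n) : Prop :=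
  closed S /\ S !=set0 /\
  exists eta : R, 0 < eta < 1 /\
    forall (x : 'rV[R]_n) (r : R), S x -> 0 < r < 1 ->
      exists y : 'rV[R]_n, eball y (eta * r) `<=` eball x r /\
                           eball y (eta * r) `&` S = set0.

Definition box (R : realType) (n : nat) (a b : 'rV[R]_n) : set 'rV[R]_n :=
  [set x | forall i : 'I_n, a 0 i < x 0 i < b 0 i].
Definition box_vol (R : realType) (n : nat) (a b : 'rV[R]_n) : R :=
  \prod_(i < n) (b 0 i - a 0 i).

Definition leb_outer (R : realType) (n : nat) (E : set 'rV[R]_n) : \bar R :=
  ereal_inf [set s : \bar R | exists a b : nat -> 'rV[R]_n,
    [/\ forall k (i : 'I_n), a k 0 i <= b k 0 i,
        E `<=` \bigcup_k box (a k) (b k) &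
        s = (\sum_(0 <= k <oo) (box_vol (a k) (b k))%:E)%E]].

(* Interior regular domain; |Q| = l^n for a cube of edge length l. *)
Definition interior_regular (R : realType) (n : nat) (O : set 'rV[R]_n) : Prop :=
  exists c : R, 0 < c /\
    forall (x : 'rV[R]_n) (l : R), bdry O x -> 0 < l <= 1 ->
      ((c * l ^+ n)%:E <= leb_outer (O `&` cube x l))%E.

(* Fix a boundary point x and a scale l, and let r be a dyadic number comparable
   to l.  The ball condition gives a ball B(y, eta r) inside B(x, r) missing the
   boundary; the cube Q centred at y of side eta r / (n + 1) lies in B(y, eta r / 2),
   so Q misses the boundary and, being connected, lies either in O or in its
   complement.  In the first case Q is itself a cube of O of side comparable to l
   near x.  In the second, Q is an exterior cube at distance comparable to r from
   the boundary, and I-thickness provides an interior cube of side comparable to r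
   within distance comparable to r of Q, hence again near x.  Finally, a set
   containing a cube of side l has outer measure at least l^n; this is proved by
   induction on the dimension, integrating a covering inequality over the first
   coordinate. *)

From mathcomp Require Import all_boot all_order all_algebra.
From mathcomp Require Import all_classical all_reals all_analysis.
From mathcomp Require Import measurable_realfun ring lra zify.
(* Imported last, since mathcomp-analysis has its own [edist]. *)
Set Implicit Arguments. Unset Strict Implicit. Unset Printing Implicit Defensive.
Import Order.TTheory GRing.Theory Num.Theory numFieldNormedType.Exports.
Local Open Scope classical_set_scope.
Local Open Scope ring_scope.

Lemma lebesgue_measure_itv_oo (R : realType) (a b : R) : a <= b ->
  (lebesgue_measure : measure _ R) (`]a, b[%classic : set R) = (b - a)%:E.
Proof.
move=> ab; apply: eq_trans (lebesgue_measure_itv `]a, b[) _.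
rewrite /= lte_fin; case: ltgtP ab => // -> _.
by rewrite subrr.
Qed.

Section WeightedCover.
Variable R : realType.

Lemma itv_weighted_cover (w a' b' : nat -> R) (a b t : R) :
  (forall k, 0 <= w k) -> (forall k, a' k <= b' k) -> a <= b -> 0 <= t ->
  (forall x, a < x < b ->
     (t%:E <= \sum_(0 <= k <oo) (w k * \1_(`]a' k, b' k[ : set R) x)%:E)%E) ->
  ((t * (b - a))%:E <= \sum_(0 <= k <oo) (w k * (b' k - a' k))%:E)%E.
Proof.
move=> w0 ab' ab t0 cover.
pose f k x : \bar R := (w k * \1_(`]a' k, b' k[ : set R) x)%:E.
have term_ge0 k x : (0 <= f k x)%E by rewrite lee_fin mulr_ge0.
have term_mes k : measurable_fun [set: R] (f k).
  by apply/measurable_EFinP/measurable_funM => //; exact: measurable_indic.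
pose F x := (\sum_(0 <= k <oo) f k x)%E.
have F_mes : measurable_fun [set: R] F by apply: ge0_emeasurable_sum => // k x.
have -> : (t * (b - a))%:E = (\int[lebesgue_measure]_(x in `]a, b[) t%:E)%E.
  by rewrite integral_cst //= lebesgue_measure_itv_oo // EFinM.
apply: (@le_trans _ _ (\int[lebesgue_measure]_(x in `]a, b[) F x)%E).
  by apply: ge0_le_integral => //; exact: measurable_funS F_mes.
apply: (@le_trans _ _ (\int[lebesgue_measure]_x F x)%E).
  by apply: ge0_subset_integral => // x _; apply: nneseries_ge0.
rewrite integral_nneseries //; apply: lee_nneseries => k _.
  by move=> _; apply: integral_ge0.
rewrite (_ : f k = fun x => ((w k)%:E * (\1_(`]a' k, b' k[ : set R) x)%:E)%E).
  rewrite (@ge0_integralZl _ _ R lebesgue_measure setT) //; last first.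
  - by rewrite lee_fin.
  - by apply/measurable_EFinP; exact: measurable_indic.
  by rewrite integral_indic // setIT lebesgue_measure_itv_oo // EFinM.
by apply/funext => x; rewrite /f EFinM.
Qed.
End WeightedCover.

Definition row_cons (T : Type) (n : nat) (x0 : T) (x : 'rV[T]_n) : 'rV[T]_n.+1 :=
  \row_i (if unlift ord0 i is Some j then x 0 j else x0).

Definition row_behead (T : Type) (n : nat) (v : 'rV[T]_n.+1) : 'rV[T]_n :=
  \row_j v 0 (lift ord0 j).

Section Boxes.
Variable R : realType.

Lemma box_row_cons (n : nat) (a b : 'rV[R]_n.+1) (x0 : R) (x : 'rV[R]_n) :
  box a b (row_cons x0 x) <->
  a 0 ord0 < x0 < b 0 ord0 /\ box (row_behead a) (row_behead b) x.
Proof.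
split=> [inab|[inab0 inab] i].
  split; first by have := inab ord0; rewrite !mxE unlift_none.
  by move=> j; have := inab (lift ord0 j); rewrite !mxE liftK.
by rewrite !mxE; case: unliftP => [j ->|->] //; have := inab j; rewrite !mxE.
Qed.

Lemma indic_box_row_cons (n : nat) (a b : 'rV[R]_n.+1) (x0 : R) (x : 'rV[R]_n) :
  \1_(box a b) (row_cons x0 x) =
  \1_(`]a 0 ord0, b 0 ord0[ : set R) x0 * \1_(box (row_behead a) (row_behead b)) x :> R.
Proof.
set I := (`]a 0 ord0, b 0 ord0[%classic : set R).
have inIP : I x0 <-> a 0 ord0 < x0 < b 0 ord0 by rewrite /I /= in_itv.
have consP := box_row_cons a b x0 x.
rewrite !indicE; have [inI|notinI] := pselect (I x0); last first.
  by rewrite (memNset notinI) mul0r memNset // => /consP[/inIP].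
rewrite (mem_set inI) mul1r.
have [inab|notinab] := pselect (box (row_behead a) (row_behead b) x).
  by rewrite !mem_set //; apply/consP; split=> //; apply/inIP.
by rewrite (memNset notinab) memNset // => /consP[].
Qed.

Lemma box_vol_row_behead (n : nat) (a b : 'rV[R]_n.+1) :
  box_vol a b = (b 0 ord0 - a 0 ord0) * box_vol (row_behead a) (row_behead b).
Proof.
by rewrite /box_vol big_ord_recl; congr (_ * _); apply: eq_bigr => j _; rewrite !mxE.
Qed.

Lemma box_vol_ge0 (n : nat) (a b : 'rV[R]_n) :
  (forall i, a 0 i <= b 0 i) -> 0 <= box_vol a b.
Proof. by move=> ab; apply: prodr_ge0 => i _; rewrite subr_ge0. Qed.

(* Induction on the dimension: for a fixed first coordinate x0 the slices are
   covered with the weights w k * 1_(I k) x0, and integrating over x0 is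
   itv_weighted_cover. *)
Lemma box_weighted_cover (n : nat) (w : nat -> R) (a' b' : nat -> 'rV[R]_n)
    (a b : 'rV[R]_n) (t : R) :
  (forall k, 0 <= w k) -> (forall k i, a' k 0 i <= b' k 0 i) ->
  (forall i, a 0 i <= b 0 i) -> 0 <= t ->
  (forall x, box a b x ->
     (t%:E <= \sum_(0 <= k <oo) (w k * \1_(box (a' k) (b' k)) x)%:E)%E) ->
  ((t * box_vol a b)%:E <= \sum_(0 <= k <oo) (w k * box_vol (a' k) (b' k))%:E)%E.
Proof.
elim: n w a' b' a b t => [|n IHn] w a' b' a b t w0 ab' ab t0 cover.
  have box0 (c d x : 'rV[R]_0) : box c d x by case.
  rewrite /box_vol big_ord0 mulr1; apply: le_trans (cover 0 (box0 _ _ _)) _.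
  under eq_eseriesr do rewrite indicE (mem_set (box0 _ _ _)).
  by under [X in (_ <= X)%E]eq_eseriesr do rewrite big_ord0.
pose vol k := box_vol (row_behead (a' k)) (row_behead (b' k)).
pose I k := (`]a' k 0 ord0, b' k 0 ord0[%classic : set R).
have vol_ge0 k : 0 <= vol k by apply: box_vol_ge0 => i; rewrite !mxE.
rewrite box_vol_row_behead mulrCA mulrC.
under eq_eseriesr do rewrite box_vol_row_behead mulrCA mulrC -/(vol _).
apply: itv_weighted_cover => //.
- by move=> k; rewrite mulr_ge0.
- by rewrite mulr_ge0 // box_vol_ge0 // => i; rewrite !mxE.
move=> x0 x0_in.
under eq_eseriesr do rewrite mulrAC.
apply: (IHn (fun k => w k * \1_(I k) x0)) => //.
- by move=> k; rewrite mulr_ge0.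
- by move=> k i; rewrite !mxE.
- by move=> i; rewrite !mxE.
move=> x x_in.
have := cover (row_cons x0 x) (proj2 (box_row_cons _ _ _ _) (conj x0_in x_in)).
by under eq_eseriesr do rewrite indic_box_row_cons mulrA.
Qed.

Lemma leb_outer_ge_cube (n : nat) (c : 'rV[R]_n) (l : R) (E : set 'rV[R]_n) :
  0 < l -> cube c l `<=` E -> ((l ^+ n)%:E <= leb_outer E)%E.
Proof.
move=> l_gt0 cE; apply/ereal_infP => _ [a' [b' [ab' cover ->]]].
pose a := \row_i (c 0 i - l / 2); pose b := \row_i (c 0 i + l / 2).
have -> : l ^+ n = 1 * box_vol a b.
  rewrite mul1r /box_vol -[n in l ^+ n]card_ord -prodr_const.
  by apply: eq_bigr => i _; rewrite !mxE; lra.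
under eq_eseriesr do rewrite -[box_vol _ _]mul1r.
apply: box_weighted_cover => //.
- by move=> i; rewrite !mxE; lra.
move=> x x_in; have [k _ xk] : (\bigcup_k box (a' k) (b' k)) x.
  apply/cover/cE => i; have := x_in i; rewrite !mxE ltr_distlC.
  by move=> /andP[] *; apply/andP; split; lra.
have term_ge0 j : (0 <= (1 * \1_(box (a' j) (b' j)) x)%:E)%E.
  by rewrite lee_fin mul1r indicE ler0n.
rewrite (nneseriesD1 (n := k)) // indicE mem_set // mul1r; apply: leeDl.
exact: nneseries_ge0.
Qed.

End Boxes.

Section Euclidean.
Variables (R : realType) (n : nat).
Implicit Types (x y z c : 'rV[R]_n) (A B S : set 'rV[R]_n).

Lemma edist_ge0 x y : 0 <= edist x y.
Proof. exact: sqrtr_ge0. Qed.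

Lemma edist_sqr x y : edist x y ^+ 2 = \sum_(i < n) (x 0 i - y 0 i) ^+ 2.
Proof. by rewrite sqr_sqrtr // sumr_ge0 // => i _; rewrite sqr_ge0. Qed.

Lemma edistC x y : edist x y = edist y x.
Proof. by congr Num.sqrt; apply: eq_bigr => i _; rewrite -sqrrN opprB. Qed.

Lemma edistxx x : edist x x = 0.
Proof. by rewrite /edist big1 ?sqrtr0 // => i _; rewrite subrr expr0n. Qed.

Lemma coord_le_edist x y i : `|x 0 i - y 0 i| <= edist x y.
Proof.
rewrite -ler_sqr ?nnegrE ?edist_ge0 // edist_sqr real_normK ?num_real //.
by rewrite (bigD1 i) //= lerDl sumr_ge0 // => j _; rewrite sqr_ge0.
Qed.

Lemma edist_sqr_le x y (h : R) : (forall i, `|x 0 i - y 0 i| <= h) ->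
  edist x y ^+ 2 <= n%:R * h ^+ 2.
Proof.
move=> close; rewrite edist_sqr mulr_natl -[n in _ *+ n]card_ord -sumr_const.
apply: ler_sum => i _; rewrite -real_normK ?num_real // ler_sqr ?nnegrE //.
exact: le_trans (close i).
Qed.

(* A squared triangle inequality is enough below and needs no Cauchy-Schwarz. *)
Lemma edist_sqr_triangle x y z :
  edist x z ^+ 2 <= 2 * edist x y ^+ 2 + 2 * edist y z ^+ 2.
Proof.
rewrite !edist_sqr !mulr_sumr -big_split /=; apply: ler_sum => i _.
have := sqr_ge0 (x 0 i - 2 * y 0 i + z 0 i); nra.
Qed.

Lemma setdist_le_edist A B x y : A x -> B y -> setdist A B <= edist x y.
Proof.
move=> Ax By; apply: ge_inf; last by exists x => //; exists y.
by exists 0 => _ [u _ [v _ <-]]; exact: edist_ge0.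
Qed.

Lemma setdist_ge A B (d : R) : A !=set0 -> B !=set0 ->
  (forall x y, A x -> B y -> d <= edist x y) -> d <= setdist A B.
Proof.
move=> [x Ax] [y By] le_d.
apply: lb_le_inf; first by exists (edist x y); exists x => //; exists y.
by move=> _ [u Au [v Bv <-]]; exact: le_d.
Qed.

Lemma setdist_lt_witness A B (d : R) : A !=set0 -> B !=set0 -> setdist A B < d ->
  exists x y, [/\ A x, B y & edist x y < d].
Proof.
move=> [x Ax] [y By] lt_d.
have inf_dist : has_inf [set edist u v | u in A & v in B].
  split; first by exists (edist x y); exists x => //; exists y.
  by exists 0 => _ [u _ [v _ <-]]; exact: edist_ge0.
have gap_gt0 : 0 < d - setdist A B by rewrite subr_gt0.
have [_ [u Au [v Bv <-]] uv_lt] := inf_adherent gap_gt0 inf_dist.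
by exists u, v; split=> //; rewrite addrC subrK in uv_lt.
Qed.

Lemma cube_center c (l : R) : 0 < l -> cube c l c.
Proof. by move=> l_gt0 i; rewrite subrr normr0 divr_gt0. Qed.

Lemma cube_sub_cube c c' (l l' : R) :
  (forall i, `|c 0 i - c' 0 i| <= (l' - l) / 2) -> cube c l `<=` cube c' l'.
Proof.
move=> close x x_in i; have := close i; have := x_in i.
rewrite !ltr_distlC ler_distlC => /andP[? ?] /andP[? ?].
by apply/andP; split; lra.
Qed.

Lemma subset_cube c (l l' : R) : l <= l' -> cube c l `<=` cube c l'.
Proof.
by move=> le_ll'; apply: cube_sub_cube => i; rewrite subrr normr0 divr_ge0 ?subr_ge0.
Qed.

Lemma cube_sub_eball y (s : R) : 0 < s -> cube y (s / n.+1%:R) `<=` eball y (s / 2).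
Proof.
move=> s_gt0 x x_in; have s2_ge0 : 0 <= s / 2 by rewrite divr_ge0 ?ltW.
rewrite /eball /= -ltr_sqr ?nnegrE ?edist_ge0 //.
have x_close i : `|y 0 i - x 0 i| <= s / n.+1%:R / 2 by rewrite distrC ltW.
apply: le_lt_trans (edist_sqr_le x_close) _.
have : 0 < s / n.+1%:R / 2 by rewrite !divr_gt0.
have -> : s / 2 = n.+1%:R * (s / n.+1%:R / 2) by rewrite mulrA (mulrC n.+1%:R) divfK.
move: (s / n.+1%:R / 2) => h h_gt0.
by rewrite exprMn ltr_pM2r ?exprn_gt0 // -natrX ltr_nat; lia.
Qed.

Lemma cube_setdist_ge y S (s : R) : 0 < s -> S !=set0 -> eball y s `&` S = set0 ->
  s / 2 <= setdist (cube y (s / n.+1%:R)) S.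
Proof.
move=> s_gt0 S_ne ball_S; apply: setdist_ge => //.
  by exists y; apply/cube_center/divr_gt0.
move=> q b q_in Sb; have yq : edist y q < s / 2 by apply: cube_sub_eball.
have yb : s <= edist y b.
  by rewrite leNgt; apply/negP => yb; rewrite -[False]/(set0 b) -ball_S.
have s_ge0 := ltW s_gt0; have s2_ge0 : 0 <= s / 2 by rewrite divr_ge0.
rewrite -ler_sqr ?nnegrE ?edist_ge0 //.
have := edist_sqr_triangle y q b.
have : edist y q ^+ 2 < (s / 2) ^+ 2 by rewrite ltr_sqr ?nnegrE ?edist_ge0.
have : s ^+ 2 <= edist y b ^+ 2 by rewrite ler_sqr ?nnegrE ?edist_ge0.
have -> : (s / 2) ^+ 2 = s ^+ 2 / 4 by field.
lra.
Qed.

Lemma cube_sub_cube_setdist x ce ci (a le li d : R) : 0 < le -> 0 < li ->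
  cube ce le `<=` cube x a -> setdist (cube ce le) (cube ci li) < d ->
  cube ci li `<=` cube x (a + 2 * li + 2 * d).
Proof.
move=> le_gt0 li_gt0 ce_x near.
have [q [p [q_in p_in qp]]] :=
  setdist_lt_witness (ex_intro _ _ (cube_center ce le_gt0))
    (ex_intro _ _ (cube_center ci li_gt0)) near.
apply: cube_sub_cube => i.
have := ce_x q q_in i; have := p_in i; have := le_lt_trans (coord_le_edist q p i) qp.
rewrite !ltr_distlC => /andP[? ?] /andP[? ?] /andP[? ?].
by rewrite ler_distlC; apply/andP; split; lra.
Qed.

End Euclidean.

Lemma connected_bdry_dichotomy (T : topologicalType) (A O : set T) :
  connected A -> A `&` (closure O `\` O°) = set0 -> A `<=` O \/ A `<=` ~` O.
Proof.
move=> A_conn A_bdry.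
have A_clO : A `&` closure O = A `&` O°.
  apply/seteqP; split=> x [Ax xO]; split=> //.
    by apply: contrapT => xNint; rewrite -[False]/(set0 x) -A_bdry.
  by move/interior_subset: xO; exact: subset_closure.
have [[z [Az z_int]]|A_int0] := pselect (A `&` O° !=set0).
  left; have AO : A `&` O° = A.
    apply: A_conn; first by exists z.
      by exists O°; [exact: open_interior|].
    by exists (closure O); [exact: closed_closure|].
  move=> x Ax; suff : (A `&` O°) x by case=> _ /interior_subset.
  by rewrite AO.
right=> x Ax Ox; apply: A_int0; exists x.
by rewrite -A_clO; split=> //; exact: subset_closure.
Qed.

Lemma cube_connected (R : realType) (n : nat) (c : 'rV[R]_n) (l : R) :
  0 < l -> connected (cube c l).
Proof.
move=> l_gt0; pose seg z := (fun t : R => c + t *: (z - c)) @` `[0, 1].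
have -> : cube c l = \bigcup_(z in cube c l) seg z.
  apply/seteqP; split=> [z z_in|_ [z z_in [t t01 <-]]].
    exists z => //; exists 1; first by rewrite /= in_itv /= lexx ler01.
    by rewrite scale1r addrC subrK.
  move: t01; rewrite /= in_itv /= => /andP[t_ge0 t_le1] i.
  rewrite !mxE addrC addrK normrM (ger0_norm t_ge0).
  by apply: le_lt_trans (z_in i); rewrite ler_piMl.
apply: bigcup_connected.
  exists c => z _; exists 0; last by rewrite scale0r addr0.
  by rewrite /= in_itv /= lexx ler01.
move=> z _; apply: connected_continuous_connected; first exact: segment_connected.
apply: continuous_subspaceT => t.
have scale_cont : {for t, continuous (fun s : R => s *: (z - c))}.
  by apply: continuousZr_tmp; exact: cvg_id.
have const_cont : {for t, continuous (fun _ : R => c)} by exact: cst_continuous.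
exact: (continuousD const_cont scale_cont).
Qed.

Lemma dyadic_between (R : realType) (u : R) : 0 < u -> u <= 1 ->
  exists j : nat, u / 2 < 2 ^- j <= u.
Proof.
move=> u_gt0 u_le1.
suff dyadic_from k : 2 ^- k <= u -> exists j : nat, u / 2 < 2 ^- j <= u.
  have [k k_gt] : exists k : nat, u^-1 < k.+1%:R.
    exists (Num.Def.trunc u^-1); exact: truncnS_gt.
  apply: (dyadic_from k); rewrite -[u]invrK lef_pV2 ?posrE ?exprn_gt0 ?invr_gt0 //.
  by rewrite (le_trans (ltW k_gt)) // -natrX ler_nat ltn_expl.
elim: k => [|k IHk] uk.
  by exists 0%N; rewrite expr0 invr1 in uk *; rewrite uk andbT; lra.
have [/IHk //|uk'] := leP (2 ^- k) u.
exists k.+1; rewrite uk andbT.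
by move: uk'; rewrite exprS invfM; lra.
Qed.

Definition interior_cubes (R : realType) (n : nat) (O : set 'rV[R]_n) (c : R) :=
  forall (x : 'rV[R]_n) (l : R), bdry O x -> 0 < l <= 1 ->
    exists (ci : 'rV[R]_n) (li : R),
      [/\ 0 < li, c * l <= li & cube ci li `<=` O `&` cube x l].

Definition dyadic_interior_cubes (R : realType) (n : nat) (O : set 'rV[R]_n) (c K : R) :=
  forall (x : 'rV[R]_n) (j : nat), bdry O x -> (2 : R) ^- j < 1 ->
    exists (ci : 'rV[R]_n) (li : R),
      [/\ 0 < li, c * 2 ^- j <= li & cube ci li `<=` O `&` cube x (K * 2 ^- j)].

Section ThickBallCondition.
Variables (R : realType) (n : nat) (O : set 'rV[R]_n) (eta : R).
Hypothesis eta01 : 0 < eta < 1.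
Hypothesis ball_O : forall (x : 'rV[R]_n) (r : R), bdry O x -> 0 < r < 1 ->
  exists y, eball y (eta * r) `<=` eball x r /\ eball y (eta * r) `&` bdry O = set0.
Hypothesis thick : I_thick O.

Let N : R := n.+1%:R.

Let N_ge1 : 1 <= N. Proof. by rewrite /N ler1n. Qed.

Let N_gt0 : 0 < N. Proof. exact: ltr0Sn. Qed.

Lemma ball_condition_cube (x : 'rV[R]_n) (r : R) : bdry O x -> 0 < r < 1 ->
  exists y, [/\ cube y (eta / N * r) `<=` cube x (4 * r),
    cube y (eta / N * r) `&` bdry O = set0 &
    eta / 2 * r <= setdist (cube y (eta / N * r)) (bdry O) <= r].
Proof.
move=> bx r01; have [y [y_x y_far]] := ball_O bx r01.
have [/andP[eta_gt0 eta_lt1] /andP[r_gt0 _]] := (eta01, r01).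
have s_gt0 : 0 < eta * r by rewrite mulr_gt0.
have y_in : eball y (eta * r) y by rewrite /eball /= edistxx.
have xy : edist x y < r by exact: y_x.
exists y; rewrite [eta / N * r]mulrAC; split.
- have side_le_r : eta * r / N <= r.
    rewrite ler_pdivrMr // (le_trans _ (ler_peMr (ltW r_gt0) N_ge1)) //.
    nra.
  apply: cube_sub_cube => i; move: (eta * r / N) side_le_r => side side_le_r.
  have := le_lt_trans (coord_le_edist y x i); rewrite edistC => /(_ _ xy).
  by rewrite ltr_distlC ler_distlC => /andP[? ?]; apply/andP; split; lra.
- apply/seteqP; split=> // q [q_in bq]; rewrite -y_far; split=> //.
  have := cube_sub_eball s_gt0 q_in; rewrite /eball /=.
  lra.
- apply/andP; split.
    by rewrite [eta / 2 * r]mulrAC; apply: cube_setdist_ge => //; exists x.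
  apply: le_trans (ltW xy); rewrite edistC; apply: setdist_le_edist bx.
  exact/cube_center/divr_gt0.
Qed.

Lemma thick_dyadic_cubes :
  exists c K : R, [/\ 0 < c, 1 < K & dyadic_interior_cubes O c K].
Proof.
have [eta_gt0 _] := andP eta01.
have etaN_gt0 : 0 < eta / N by rewrite divr_gt0.
have [c5 [c6 [c7 [c8 [[c5_gt0 c6_gt0 _ c8_gt0] interior_cube]]]]] :=
  thick.2 (eta / N) (eta / N) (eta / 2) 1 0%N etaN_gt0 etaN_gt0
    (divr_gt0 eta_gt0 (ltr0Sn _ 1)) ltr01.
(* The exterior cube lies in the cube of side 4 r at x, so an interior cube of side
   li <= c6 r within distance (c8 + 1) r of it lies in the cube of side K r. *)
exists (Num.min (eta / N) c5), (2 * (c6 + c8 + 3)); split.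
- by rewrite lt_min etaN_gt0.
- lra.
move=> x j bx r_lt1; set r := 2 ^- j in r_lt1 *.
have r_gt0 : 0 < r by rewrite invr_gt0 exprn_gt0.
have r01 : 0 < r < 1 by rewrite r_gt0.
have [y [Q_x Q_bdry Q_dist]] := ball_condition_cube bx r01.
have Q_gt0 : 0 < eta / N * r by rewrite mulr_gt0.
have [QO|QNO] := connected_bdry_dichotomy (cube_connected (c := y) Q_gt0) Q_bdry.
  exists y, (eta / N * r); split=> //; first by rewrite ler_pM2r // ge_min lexx.
  move=> q q_in; split; first exact: QO.
  by apply: subset_cube (Q_x _ q_in); rewrite ler_pM2r //; lra.
have Q_bounds : eta / N * r <= eta / N * r <= eta / N * r by rewrite lexx.
have Q_dist1 : eta / 2 * r <= setdist (cube y (eta / N * r)) (bdry O) <= 1 * r.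
  by rewrite mul1r.
have [ci [li [[li_gt0 ci_O] /andP[li_lo li_hi] _ _ near]]] :=
  interior_cube j y (eta / N * r) (leq0n j) (conj Q_gt0 QNO) Q_bounds Q_dist1.
rewrite -/r in li_lo li_hi near.
exists ci, li; split=> //.
  by rewrite (le_trans _ li_lo) // ler_pM2r // ge_min lexx orbT.
move=> z z_in; split; first exact: ci_O.
have near' : setdist (cube y (eta / N * r)) (cube ci li) < (c8 + 1) * r by nra.
apply: (subset_cube _ (cube_sub_cube_setdist Q_gt0 li_gt0 Q_x near' z_in)).
nra.
Qed.

End ThickBallCondition.

Lemma interior_cubes_of_dyadic (R : realType) (n : nat) (O : set 'rV[R]_n) (c K : R) :
  0 < c -> 1 < K -> dyadic_interior_cubes O c K -> interior_cubes O (c / (2 * K)).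
Proof.
move=> c_gt0 K_gt1 dyadic x l bx /andP[l_gt0 l_le1].
have K_gt0 : 0 < K by lra.
have lK_gt0 : 0 < l / K by rewrite divr_gt0.
have lK_lt1 : l / K < 1 by rewrite ltr_pdivrMr // mul1r (le_lt_trans l_le1).
have [j /andP[r_lo r_hi]] := dyadic_between lK_gt0 (ltW lK_lt1).
have [ci [li [li_gt0 r_li ci_sub]]] := dyadic x j bx (le_lt_trans r_hi lK_lt1).
exists ci, li; split=> //.
  apply: le_trans r_li.
  have -> : c / (2 * K) * l = c * (l / K / 2) by field; rewrite gt_eqF.
  by rewrite ler_pM2l // ltW.
move=> z /ci_sub [zO z_in]; split=> //; apply: subset_cube z_in.
by rewrite -ler_pdivlMl // mulrC.
Qed.

Lemma interior_regular_of_interior_cubes (R : realType) (n : nat) (O : set 'rV[R]_n)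
    (c : R) :
  0 < c -> interior_cubes O c -> interior_regular O.
Proof.
move=> c_gt0 cubes; exists (c ^+ n); split; first exact: exprn_gt0.
move=> x l bx l01; have [ci [li [li_gt0 le_li sub]]] := cubes x l bx l01.
apply: le_trans (leb_outer_ge_cube li_gt0 sub).
have [l_gt0 _] := andP l01.
by rewrite lee_fin -exprMn lerXn2r // nnegrE ?mulr_ge0 ?ltW.
Qed.

Theorem proposition5p10 (R : realType) (n : nat) (O : set 'rV[R]_n) :
  I_thick O -> ball_condition (bdry O) -> interior_regular O.
Proof.
move=> thick [_ [_ [eta [eta01 ball_O]]]].
have [c [K [c_gt0 K_gt1 cubes]]] := thick_dyadic_cubes eta01 ball_O thick.
apply: (interior_regular_of_interior_cubes _ (interior_cubes_of_dyadic c_gt0 K_gt1 cubes)).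
by rewrite divr_gt0 ?mulr_gt0 // (lt_trans ltr01).
Qed.
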